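(* Consider the discrete setting (finite state, TRV and input spaces) with horizon $T$, parameter $\beta>0$, and Problem OPT as defined in the context. Fix $t\in\{0,\dots,T-1\}$. A necessary condition for $q_t(\tilde{x}\mid x)$ to be optimal for OPT is that $$q_t(\tilde{x}_t\mid x_t)=\frac{q_t(\tilde{x}_t)\exp\big(-\beta\,\mathbb{E}(\nu_{t+1}+c_t\mid x_t,\tilde{x}_t)\big)}{Z_t(x_t)},$$ where $\nu_T(x_T)=c_T(x_T)$, $$\nu_t(x_t)=\mathbb{E}(c_t+\nu_{t+1}\mid x_t)+\frac{1}{\beta}\mathrm{KL}\big(q_t(\tilde{x}_t\mid x_t)\,\|\,q_t(\tilde{x}_t)\big),$$ $$Z_t(x_t)=\sum_{\tilde{x}}q_t(\tilde{x})\exp\big(-\beta\,\mathbb{E}(c_t+\nu_{t+1}\mid x_t,\tilde{x})\big).$$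
   Context: The system has finite state space $\mathcal{X}$, TRV space $\tilde{\mathcal{X}}$, input space $\mathcal{U}$, known transition probabilities $p_t(x_{t+1}\mid x_t,u_t)$, costs $c_t(x,u)$ for $t<T$ and terminal cost $c_T(x)$. Decision variables are stochastic maps $q_t(\tilde{x}\mid x)$ and policies $\pi_t(u\mid\tilde{x})$; the state distributions $p_t(x)$ satisfy the forward equations $p_t(x_{t+1}\mid x_t)=\sum_{u,\tilde{x}}p_t(x_{t+1}\mid x_t,u)\pi_t(u\mid\tilde{x})q_t(\tilde{x}\mid x_t)$ and $p_{t+1}(x_{t+1})=\sum_x p_t(x_{t+1}\mid x)p_t(x)$, and $q_t(\tilde{x})=\sum_x q_t(\tilde{x}\mid x)p_t(x)$. Problem OPT: minimize $\sum_{t=0}^{T}\big[\mathbb{E}_{p_t}c_t(x_t,u_t)+\frac{1}{\beta}\mathbb{I}(x_t;\tilde{x}_t)\big]$ with $\mathbb{I}(x_t;\tilde{x}_t)=\sum_{x,\tilde{x}}q_t(\tilde{x}\mid x)p_t(x)\log\frac{q_t(\tilde{x}\mid x)}{q_t(\tilde{x})}$. Conditional expectations are: $\mathbb{E}(c_t+\nu_{t+1}\mid x,\tilde{x})=\sum_u\pi_t(u\mid\tilde{x})\big[c_t(x,u)+\sum_{x'}p_t(x'\mid x,u)\nu_{t+1}(x')\big]$ and $\mathbb{E}(c_t+\nu_{t+1}\mid x)=\sum_{\tilde{x}}q_t(\tilde{x}\mid x)\,\mathbb{E}(c_t+\nu_{t+1}\mid x,\tilde{x})$. ''Necessary condition''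 refers to the first-order necessary conditions for optimality of the Lagrangian of OPT. *)

From HB Require Import structures.
From mathcomp Require Import all_boot all_order all_algebra.
From mathcomp Require Import reals.
From mathcomp.analysis Require Import sequences exp.
Set Implicit Arguments. Unset Strict Implicit. Unset Printing Implicit Defensive.
Import Order.TTheory GRing.Theory Num.Theory.
Local Open Scope ring_scope.

Section OPT.
Variables (R : realType) (X Xt U : finType).
(* P t x u y = p_t(y | x, u) ; c t x u = c_t(x,u) ; cT = c_T ; p0 = p_0 *)
Variables (T : nat) (beta : R) (P : nat -> X -> U -> X -> R)
  (c : nat -> X -> U -> R) (cT : X -> R) (p0 : X -> R).

(* stochastic map / kernel K(b | a) = K a b *)
Definition is_kernel (A B : finType) (K : A -> B -> R) : Prop :=
  (forall a b, 0 <= K a b) /\ (forall a, \sum_(b : B) K a b = 1).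

Definition is_dist (A : finType) (p : A -> R) : Prop :=
  (forall a, 0 <= p a) /\ \sum_(a : A) p a = 1.

(* decision variables: q t x xt = q_t(xt | x), pi t xt u = pi_t(u | xt) *)
Variables (q : nat -> X -> Xt -> R) (pi : nat -> Xt -> U -> R).

Fixpoint dist (t : nat) : X -> R :=
  match t with
  | 0 => p0
  | t'.+1 => fun y => \sum_(x : X) (\sum_(u : U) \sum_(xt : Xt)
               P t' x u y * pi t' xt u * q t' x xt) * dist t' x
  end.

Definition marg (t : nat) (xt : Xt) : R := \sum_(x : X) q t x xt * dist t x.

Definition MI (t : nat) : R :=
  \sum_(x : X) \sum_(xt : Xt) q t x xt * dist t x * ln (q t x xt / marg t xt).

Definition Ecost (t : nat) : R :=
  \sum_(x : X) dist t x *
    \sum_(xt : Xt) q t x xt * \sum_(u : U) pi t xt u * c t x u.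
Definition EcostT : R := \sum_(x : X) dist T x * cT x.

Definition Jcost : R :=
  \sum_(t < T) (Ecost t + beta^-1 * MI t) + (EcostT + beta^-1 * MI T).

(* E(c_t + V | x, xt) and E(c_t + V | x) *)
Definition condE2 (t : nat) (V : X -> R) (x : X) (xt : Xt) : R :=
  \sum_(u : U) pi t xt u * (c t x u + \sum_(y : X) P t x u y * V y).
Definition condE1 (t : nat) (V : X -> R) (x : X) : R :=
  \sum_(xt : Xt) q t x xt * condE2 t V x xt.

Definition KL (t : nat) (x : X) : R :=
  \sum_(xt : Xt) q t x xt * ln (q t x xt / marg t xt).

(* nu_rec k t = nu_t when k = T - t *)
Fixpoint nu_rec (k t : nat) : X -> R :=
  match k with
  | 0 => cT
  | k'.+1 => fun x => condE1 t (nu_rec k' t.+1) x + beta^-1 * KL t x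
  end.
Definition nu (t : nat) : X -> R := nu_rec (T - t) t.

Definition Zpart (t : nat) (x : X) : R :=
  \sum_(xt : Xt) marg t xt * expR (- beta * condE2 t (nu t.+1) x xt).

End OPT.

Definition feasible (R : realType) (X Xt U : finType) (T : nat)
  (q : nat -> X -> Xt -> R) (pi : nat -> Xt -> U -> R) : Prop :=
  (forall t, (t <= T)%N -> is_kernel (q t)) /\
  (forall t, (t < T)%N -> is_kernel (pi t)).

From HB Require Import structures.
From mathcomp Require Import all_boot all_order all_algebra.
From mathcomp Require Import reals.
From mathcomp.analysis Require Import sequences exp.
From mathcomp Require Import ring lra.
Set Implicit Arguments. Unset Strict Implicit.
Import Order.TTheory GRing.Theory Num.Theory.
Local Open Scope ring_scope.

(* Perturb an optimal solution in the single row q_t(. | x) and make the last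
   channel q_T constant; this kills I(x_T; x~_T), the only term of the cost
   that nu ignores.  The mutual information of a channel is at most its
   average KL divergence to any reference distribution, with equality at its
   own marginal.  Measuring against the optimal marginals q_s(x~) and
   telescoping the value functions, the perturbed cost is bounded by the
   optimal one in which the row q_t(. | x) contributes through the free energy
     F(k) = sum_xt k(xt) E(c_t + nu_{t+1} | x, xt) + beta^-1 KL(k || q_t(.)).
   So the optimal row minimises F.  As F(k) = beta^-1 (KL(k || Gibbs) - ln Z_t(x)),
   the equality case of Gibbs' inequality forces it to be the Gibbs row. *)

Section RelativeEntropy.
Variable R : realType.
Implicit Types a b : R.

Lemma mul_expR_Nln_div a b : 0 < a -> 0 < b -> a * expR (- ln (a / b)) = b.
Proof.
move=> a_gt0 b_gt0; rewrite expRN lnK ?posrE ?divr_gt0 //.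
by rewrite invf_div mulrC divfK ?lt0r_neq0.
Qed.

Lemma subr_le_xln_div a b : 0 <= a -> 0 <= b -> (b = 0 -> a = 0) ->
  a - b <= a * ln (a / b).
Proof.
move=> a_ge0 b_ge0 ab; have [->|a_neq0] := eqVneq a 0; first by rewrite mul0r; lra.
have a_gt0 : 0 < a by rewrite lt0r a_neq0.
have b_gt0 : 0 < b by rewrite lt0r b_ge0 andbT; apply: contra_neq a_neq0.
rewrite -{1}(mul_expR_Nln_div a_gt0 b_gt0) -[X in X - _]mulr1 -mulrBr.
rewrite ler_pM2l //; have := expR_ge1Dx (- ln (a / b)); lra.
Qed.

Lemma xln_div_eq_subr a b : 0 < a -> a * ln (a / b) = a - b -> a = b.
Proof.
move=> a_gt0; have [b_gt0|b_le0] := ltP 0 b; last first.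
  rewrite ln0 ?mulr0 => [/esym/eqP|]; first by rewrite subr_eq0 => /eqP.
  by rewrite pmulr_rle0 // invr_le0.
have ab := mul_expR_Nln_div a_gt0 b_gt0; set y := ln (a / b) in ab * => ey.
have {}ey : y = 1 - expR (- y).
  by apply: (mulfI (lt0r_neq0 a_gt0)); rewrite ey mulrBr mulr1 ab.
have y0 : y = 0.
  apply/eqP/negP => /negP y_neq0; have := @expR_gt1Dx R (- y).
  by rewrite oppr_eq0 y_neq0 => /(_ isT); lra.
by rewrite -ab y0 oppr0 expR0 mulr1.
Qed.

(* Also at a = 0, where a / a = 0 and ln 0 = 0. *)
Lemma ln_div_self a : ln (a / a) = 0.
Proof. by have [->|a_neq0] := eqVneq a 0; [rewrite mul0r ln0 | rewrite divff // ln1]. Qed.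

Variable I : finType.
Implicit Types p r : I -> R.

Lemma relent_ge0 p r : (forall i, 0 <= p i) -> (forall i, 0 <= r i) ->
  (forall i, r i = 0 -> p i = 0) -> \sum_i r i <= \sum_i p i ->
  0 <= \sum_i p i * ln (p i / r i).
Proof.
move=> p_ge0 r_ge0 rp sr; apply: le_trans (_ : \sum_i (p i - r i) <= _).
  by rewrite sumrB subr_ge0.
by apply: ler_sum => i _; exact: subr_le_xln_div (p_ge0 i) (r_ge0 i) (rp i).
Qed.

Lemma relent_le0_eq p r : (forall i, 0 <= p i) -> (forall i, 0 <= r i) ->
  (forall i, r i = 0 -> p i = 0) -> \sum_i r i <= \sum_i p i ->
  \sum_i p i * ln (p i / r i) <= 0 -> p =1 r.
Proof.
move=> p_ge0 r_ge0 rp sr s_le0 i.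
pose f i := p i * ln (p i / r i) - (p i - r i).
have f_ge0 j : 0 <= f j.
  by rewrite subr_ge0; exact: subr_le_xln_div (p_ge0 j) (r_ge0 j) (rp j).
have sf_le0 : \sum_j f j <= 0 by rewrite /f !sumrB; lra.
have /psumr_eq0P f0 : \sum_j f j = 0 by apply/eqP; rewrite eq_le sf_le0 sumr_ge0.
have /eqP := f0 (fun j _ => f_ge0 j) i isT; rewrite subr_eq0 => /eqP.
have [-> |p_neq0] := eqVneq (p i) 0; first by rewrite mul0r; lra.
by apply: xln_div_eq_subr; rewrite lt0r p_neq0 p_ge0.
Qed.

End RelativeEntropy.

Section GibbsKernel.
Variables (R : realType) (I : finType) (beta : R) (E m : I -> R).

Definition free_energy (k : I -> R) : R :=
  \sum_i k i * E i + beta^-1 * \sum_i k i * ln (k i / m i).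
Definition partition : R := \sum_i m i * expR (- beta * E i).
Definition gibbs (i : I) : R := m i * expR (- beta * E i) / partition.

Hypothesis m_ge0 : forall i, 0 <= m i.

Lemma partition_gt0 : 0 < \sum_i m i -> 0 < partition.
Proof.
move=> sm_gt0; have Z_ge0 : 0 <= partition.
  by apply: sumr_ge0 => i _; rewrite mulr_ge0 ?expR_ge0.
rewrite lt0r Z_ge0 andbT; apply: contraTneq sm_gt0 => /psumr_eq0P Z0.
rewrite -leNgt big1 // => i _; apply/eqP.
have /eqP := Z0 (fun j _ => mulr_ge0 (m_ge0 j) (expR_ge0 _)) i isT.
by rewrite mulf_eq0 (gt_eqF (expR_gt0 _)) orbF.
Qed.

Hypotheses (beta_gt0 : 0 < beta) (Z_gt0 : 0 < partition).

Lemma gibbs_ge0 i : 0 <= gibbs i.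
Proof. by rewrite divr_ge0 ?mulr_ge0 ?m_ge0 ?expR_ge0 ?ltW. Qed.

Lemma sum_gibbs : \sum_i gibbs i = 1.
Proof. by rewrite -big_distrl /= divff // lt0r_neq0. Qed.

Lemma gibbs_eq0 i : (gibbs i == 0) = (m i == 0).
Proof.
by rewrite !mulf_eq0 invr_eq0 (gt_eqF Z_gt0) (gt_eqF (expR_gt0 _)) !orbF.
Qed.

Lemma free_energyE k : (forall i, 0 <= k i) -> (forall i, m i = 0 -> k i = 0) ->
  free_energy k =
  beta^-1 * (\sum_i k i * ln (k i / gibbs i) - ln partition * \sum_i k i).
Proof.
move=> k_ge0 mk; rewrite /free_energy [ln _ * _]big_distrr -sumrB !big_distrr.
rewrite -big_split; apply: eq_bigr => i _ /=.
have [->|k_neq0] := eqVneq (k i) 0; first by ring.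
have k_gt0 : 0 < k i by rewrite lt0r k_neq0 k_ge0.
have m_gt0 : 0 < m i by rewrite lt0r m_ge0 andbT; apply: contra_neq k_neq0; apply: mk.
have g_gt0 : 0 < gibbs i by rewrite lt0r gibbs_ge0 gibbs_eq0 lt0r_neq0.
have ln_gibbs : ln (gibbs i) = ln (m i) - beta * E i - ln partition.
  by rewrite ln_div ?lnM ?posrE ?mulr_gt0 ?expR_gt0 // expRK mulNr.
rewrite [ln (k i / m i)]ln_div ?posrE // [ln (k i / gibbs i)]ln_div ?posrE //.
by rewrite ln_gibbs; field; exact: lt0r_neq0.
Qed.

Lemma free_energy_gibbs : free_energy gibbs = - beta^-1 * ln partition.
Proof.
have mg i : m i = 0 -> gibbs i = 0 by move/eqP; rewrite -gibbs_eq0 => /eqP.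
rewrite free_energyE; [|exact: gibbs_ge0|exact: mg].
rewrite sum_gibbs big1 => [|i _]; last by rewrite ln_div_self mulr0.
by ring.
Qed.

Lemma free_energy_le_gibbs k : is_dist k -> (forall i, m i = 0 -> k i = 0) ->
  free_energy k <= free_energy gibbs -> k =1 gibbs.
Proof.
move=> [k_ge0 k1] mk; rewrite free_energy_gibbs free_energyE // k1 mulr1.
rewrite mulrBr mulNr lerBlDr addNr pmulr_rle0 ?invr_gt0 // => relent_le0.
apply: relent_le0_eq => // [i|i /eqP|]; first exact: gibbs_ge0.
  by rewrite gibbs_eq0 => /eqP /mk.
by rewrite sum_gibbs k1.
Qed.

End GibbsKernel.

Section MutualInformation.
Variables (R : realType) (X Y : finType) (d : X -> R) (K : X -> Y -> R).

Definition mix (y : Y) : R := \sum_x K x y * d x.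
Definition mutinf : R := \sum_x \sum_y K x y * d x * ln (K x y / mix y).

Lemma sum_kernel_weight (F : X -> Y -> R) :
  \sum_x \sum_y K x y * d x * F x y = \sum_x d x * \sum_y K x y * F x y.
Proof.
by apply: eq_bigr => x _; rewrite big_distrr; apply: eq_bigr => y _; rewrite mulrAC mulrC.
Qed.

Lemma mutinf_const (k : Y -> R) : (forall x, K x = k) -> \sum_x d x = 1 -> mutinf = 0.
Proof.
move=> Kk d1; rewrite /mutinf; have mixE y : mix y = k y.
  by rewrite /mix; under eq_bigr do rewrite Kk; rewrite -mulr_sumr d1 mulr1.
by apply: big1 => x _; apply: big1 => y _; rewrite mixE Kk ln_div_self mulr0.
Qed.

Hypotheses (d_ge0 : forall x, 0 <= d x) (K_ge0 : forall x y, 0 <= K x y).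

Lemma mix_ge0 y : 0 <= mix y.
Proof. by apply: sumr_ge0 => x _; rewrite mulr_ge0. Qed.

Lemma ler_mix x y : K x y * d x <= mix y.
Proof.
rewrite /mix (bigD1 x) //= lerDl sumr_ge0 // => x' _.
by rewrite mulr_ge0.
Qed.

Lemma mix_eq0 x y : mix y = 0 -> K x y * d x = 0.
Proof. by move=> m0; apply/eqP; rewrite eq_le mulr_ge0 // andbT -m0 ler_mix. Qed.

Lemma mix_eq0_kernel x y : d x != 0 -> mix y = 0 -> K x y = 0.
Proof.
by move=> d_neq0 /(mix_eq0 x) /eqP; rewrite mulf_eq0 (negPf d_neq0) orbF => /eqP.
Qed.

Lemma sum_mix : (forall x, \sum_y K x y = 1) -> \sum_y mix y = \sum_x d x.
Proof.
move=> K1; rewrite exchange_big; apply: eq_bigr => x _.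
by rewrite -mulr_suml K1 mul1r.
Qed.

Lemma mutinf_ge0 : \sum_x d x = 1 -> (forall x, \sum_y K x y = 1) -> 0 <= mutinf.
Proof.
move=> d1 K1; rewrite /mutinf sum_kernel_weight; apply: sumr_ge0 => x _.
have [->|d_neq0] := eqVneq (d x) 0; first by rewrite mul0r.
rewrite mulr_ge0 // relent_ge0 // => [y|y|]; [exact: mix_ge0|exact: mix_eq0_kernel|].
by rewrite sum_mix // d1 K1.
Qed.

Lemma mutinf_le_cross (r : Y -> R) : (forall y, 0 <= r y) ->
  \sum_y r y <= \sum_y mix y -> (forall x y, r y = 0 -> K x y * d x = 0) ->
  mutinf <= \sum_x d x * \sum_y K x y * ln (K x y / r y).
Proof.
move=> r_ge0 sr rK; rewrite -sum_kernel_weight -subr_ge0 /mutinf -sumrB.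
have cross_gap x y : K x y * d x * ln (K x y / r y) - K x y * d x * ln (K x y / mix y)
    = K x y * d x * ln (mix y / r y).
  have [->|Kd_neq0] := eqVneq (K x y * d x) 0; first by rewrite !mul0r subrr.
  have K_gt0 : 0 < K x y.
    by rewrite lt0r K_ge0 andbT; apply: contra_neq Kd_neq0 => ->; rewrite mul0r.
  have r_gt0 : 0 < r y by rewrite lt0r r_ge0 andbT; apply: contra_neq Kd_neq0; apply: rK.
  have mix_gt0 : 0 < mix y.
    by apply: lt_le_trans (ler_mix x y); rewrite lt0r Kd_neq0 mulr_ge0.
  by rewrite !ln_div ?posrE //; ring.
(* The gap is the relative entropy of the marginal with respect to r. *)
under eq_bigr do rewrite -sumrB; under eq_bigr do under eq_bigr do rewrite cross_gap.
rewrite exchange_big; under eq_bigr do rewrite -big_distrl.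
apply: relent_ge0 => // [y|y ry0]; first exact: mix_ge0.
by apply: big1 => x _; apply: rK.
Qed.

End MutualInformation.

Lemma mix_is_dist (R : realType) (X Y : finType) (d : X -> R) (K : X -> Y -> R) :
  is_dist d -> is_kernel K -> is_dist (mix d K).
Proof. by move=> [d_ge0 d1] [K_ge0 K1]; split; [exact: mix_ge0|rewrite sum_mix]. Qed.

Section OptimalityCondition.
Variables (R : realType) (X Xt U : finType) (T : nat) (beta : R)
  (P : nat -> X -> U -> X -> R) (c : nat -> X -> U -> R) (cT : X -> R)
  (p0 : X -> R) (pi : nat -> Xt -> U -> R).
Implicit Types (q : nat -> X -> Xt -> R) (V : X -> R).

Local Notation distq q := (dist P p0 q pi).
Local Notation margq q := (marg P p0 q pi).
Local Notation MIq q := (MI P p0 q pi).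
Local Notation KLq q := (KL P p0 q pi).
Local Notation Ecostq q := (Ecost P c p0 q pi).
Local Notation condE1q q := (condE1 P c q pi).
Local Notation nuq q := (nu T beta P c cT p0 q pi).

Lemma dist_eq_upto q q' n :
  (forall s, (s < n)%N -> q' s = q s) -> distq q' n = distq q n.
Proof.
elim: n => [//|n IH] qq' /=.
by rewrite IH => [|s sn]; [rewrite qq'|apply: qq'; rewrite ltnS ltnW].
Qed.

Lemma MI_KL q s : MIq q s = \sum_x distq q s x * KLq q s x.
Proof. exact: sum_kernel_weight. Qed.

Lemma sum_dist_condE1 q s V :
  \sum_x distq q s x * condE1q q s V x = Ecostq q s + \sum_y distq q s.+1 y * V y.
Proof.
have condE1_split x : condE1q q s V x =
    \sum_xt q s x xt * \sum_u pi s xt u * c s x u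
  + \sum_xt q s x xt * \sum_u pi s xt u * \sum_y P s x u y * V y.
  rewrite -big_split; apply: eq_bigr => xt _ /=; rewrite -mulrDr -big_split /=.
  by congr (_ * _); apply: eq_bigr => u _; rewrite mulrDr.
under eq_bigr do rewrite condE1_split mulrDr.
rewrite big_split /=; congr (_ + _).
transitivity (\sum_x \sum_xt \sum_u \sum_y
    distq q s x * q s x xt * pi s xt u * P s x u y * V y).
  apply: eq_bigr => x _; rewrite big_distrr; apply: eq_bigr => xt _ /=.
  rewrite mulrA big_distrr; apply: eq_bigr => u _ /=.
  by rewrite mulrA big_distrr; apply: eq_bigr => y _ /=; ring.
transitivity (\sum_y \sum_x \sum_u \sum_xt
    distq q s x * q s x xt * pi s xt u * P s x u y * V y); last first.
  apply: eq_bigr => y _; rewrite big_distrl; apply: eq_bigr => x _ /=.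
  rewrite !big_distrl; apply: eq_bigr => u _ /=.
  by rewrite !big_distrl; apply: eq_bigr => xt _ /=; ring.
rewrite [RHS]exchange_big; apply: eq_bigr => x _ /=.
rewrite [RHS]exchange_big; under [RHS]eq_bigr do rewrite exchange_big.
by rewrite exchange_big.
Qed.

Lemma nuS q s x : (s < T)%N ->
  nuq q s x = condE1q q s (nuq q s.+1) x + beta^-1 * KLq q s x.
Proof. by move=> sT; rewrite /nu -subnSK. Qed.

Lemma nuT q : nuq q T = cT.
Proof. by rewrite /nu subnn. Qed.

Definition stage_cost q i := Ecostq q i + beta^-1 * MIq q i.
Definition tail_cost q s :=
  \sum_(s <= i < T) stage_cost q i + EcostT T P cT p0 q pi.

Lemma Jcost_split q t : (t < T)%N ->
  Jcost T beta P c cT p0 q pi = \sum_(0 <= i < t) stage_cost q i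
    + stage_cost q t + tail_cost q t.+1 + beta^-1 * MIq q T.
Proof.
move=> tT; rewrite /Jcost /tail_cost -(big_mkord xpredT (stage_cost q)).
rewrite (@big_cat_nat _ _ _ t) ?(ltnW tT) // (big_ltn tT) /=.
by rewrite /stage_cost; ring.
Qed.

Lemma tail_costE q q' s : (s <= T)%N ->
  (forall i, (s <= i < T)%N -> q' i = q i) ->
  tail_cost q' s = \sum_y distq q' s y * nuq q s y
    + beta^-1 * \sum_(s <= i < T) (MIq q' i - \sum_x distq q' i x * KLq q i x).
Proof.
move=> sT qq'; pose f i := \sum_y distq q' i y * nuq q i y.
have stage_step i : (s <= i < T)%N -> stage_cost q' i =
    f i - f i.+1 + beta^-1 * (MIq q' i - \sum_x distq q' i x * KLq q i x).
  move=> /andP[si iT].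
  have -> : f i = Ecostq q' i + f i.+1 + beta^-1 * \sum_x distq q' i x * KLq q i x.
    rewrite /f -sum_dist_condE1 mulr_sumr -big_split; apply: eq_bigr => y _.
    by rewrite nuS // mulrDr mulrCA /condE1 qq' ?si.
  by rewrite /stage_cost; ring.
have telescope : \sum_(s <= i < T) (f i - f i.+1) = f s - f T.
  by rewrite -opprB -(telescope_sumr _ sT) -sumrN; apply: eq_bigr => i _; rewrite opprB.
rewrite /tail_cost (eq_big_nat _ _ stage_step) big_split /= -mulr_sumr.
rewrite telescope /f nuT /EcostT.
ring.
Qed.

Lemma stage_cost_eq_upto q q' i :
  (forall s, (s <= i)%N -> q' s = q s) -> stage_cost q' i = stage_cost q i.
Proof.
move=> qq'; have dq : distq q' i = distq q i.
  by apply: dist_eq_upto => s si; apply/qq'/ltnW.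
by rewrite /stage_cost /Ecost /MI /marg dq qq'.
Qed.

Definition row_free_energy q t x :=
  free_energy beta (condE2 P c pi t (nuq q t.+1) x) (margq q t).

Lemma stage_tail_eq q t : (t < T)%N ->
  stage_cost q t + tail_cost q t.+1 =
  \sum_x distq q t x * row_free_energy q t x (q t x).
Proof.
move=> tT; rewrite (tail_costE (q := q)) // [X in beta^-1 * X]big1 => [|i _]; last first.
  by rewrite MI_KL subrr.
rewrite mulr0 addr0 /stage_cost MI_KL addrAC -sum_dist_condE1 mulr_sumr -big_split.
by apply: eq_bigr => x _ /=; rewrite /row_free_energy /free_energy /condE1 /KL; ring.
Qed.

(* p_n(x_{n+1} | x_n) of the closed loop; dist q n.+1 is its mixture. *)
Definition closed_loop q n x y := \sum_u \sum_xt P n x u y * pi n xt u * q n x xt.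

Hypotheses (p0_dist : is_dist p0)
  (P_kernel : forall s, (s < T)%N -> forall x, is_kernel (P s x)).

Lemma closed_loop_kernel q n : (n < T)%N -> is_kernel (q n) -> is_kernel (pi n) ->
  is_kernel (closed_loop q n).
Proof.
move=> nT [q_ge0 q1] [pi_ge0 pi1].
have P_ge0 x u y : 0 <= P n x u y by case: (P_kernel nT x).
have P1 x u : \sum_y P n x u y = 1 by case: (P_kernel nT x).
split=> [x y|x].
  by apply: sumr_ge0 => u _; apply: sumr_ge0 => xt _; rewrite !mulr_ge0.
rewrite -(q1 x) exchange_big; under eq_bigr do rewrite exchange_big.
rewrite exchange_big; apply: eq_bigr => xt _.
under eq_bigr do rewrite -!mulr_suml P1 mul1r.
by rewrite -mulr_suml pi1 mul1r.
Qed.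

Lemma dist_is_dist q : feasible T q pi -> forall n, (n <= T)%N -> is_dist (distq q n).
Proof.
move=> [q_kernel pi_kernel]; elim=> [//|n IH] nT.
apply: mix_is_dist (IH (ltnW nT)) _.
exact: closed_loop_kernel nT (q_kernel n (ltnW nT)) (pi_kernel n nT).
Qed.

Lemma MI_le_cross q i (r : Xt -> R) : feasible T q pi -> (i <= T)%N -> is_dist r ->
  (forall x y, r y = 0 -> q i x y * distq q i x = 0) ->
  MIq q i <= \sum_x distq q i x * \sum_y q i x y * ln (q i x y / r y).
Proof.
move=> q_feas iT [r_ge0 r1] rq; have [d_ge0 d1] := dist_is_dist q_feas iT.
have [q_ge0 q1] := q_feas.1 i iT.
by apply: mutinf_le_cross => //; rewrite r1 sum_mix // d1.
Qed.

Lemma stage_tail_le q q' t : 0 < beta -> feasible T q pi -> feasible T q' pi ->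
  (t < T)%N -> (forall s, (s < T)%N -> s != t -> q' s = q s) ->
  (forall s, (t < s < T)%N -> forall x y, margq q s y = 0 -> q s x y = 0) ->
  (forall x y, margq q t y = 0 -> q' t x y * distq q t x = 0) ->
  stage_cost q' t + tail_cost q' t.+1 <=
  \sum_x distq q t x * row_free_energy q t x (q' t x).
Proof.
move=> beta_gt0 q_feas q'_feas tT qq' q_fin q'_ac.
have binv_ge0 : 0 <= beta^-1 by rewrite invr_ge0 ltW.
have dist_t : distq q' t = distq q t.
  by apply: dist_eq_upto => s st; rewrite qq' ?(ltn_trans st) ?ltn_eqF.
have marg_dist s : (s <= T)%N -> is_dist (margq q s).
  by move=> sT; apply: mix_is_dist (dist_is_dist q_feas sT) (q_feas.1 s sT).
have future_le0 : \sum_(t.+1 <= i < T) (MIq q' i - \sum_x distq q' i x * KLq q i x) <= 0.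
  rewrite big_nat_cond; apply: sumr_le0 => i /andP[/andP[ti iT] _]; rewrite subr_le0.
  have q'i : q' i = q i by rewrite qq' // gtn_eqF.
  have q_fin_i x y : margq q i y = 0 -> q i x y = 0 by apply: q_fin; rewrite ti.
  apply: le_trans (MI_le_cross q'_feas (ltnW iT) (marg_dist i (ltnW iT)) _) _.
    by move=> x y /(q_fin_i x) q0; rewrite q'i q0 mul0r.
  by rewrite q'i.
have MI_t : MIq q' t <=
    \sum_x distq q t x * \sum_y q' t x y * ln (q' t x y / margq q t y).
  rewrite -dist_t; apply: MI_le_cross (ltnW tT) (marg_dist t (ltnW tT)) _ => //.
  by rewrite dist_t.
have row_sumE : \sum_x distq q t x * row_free_energy q t x (q' t x) =
    Ecostq q' t + \sum_y distq q' t.+1 y * nuq q t.+1 y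
    + beta^-1 * \sum_x distq q t x * \sum_y q' t x y * ln (q' t x y / margq q t y).
  rewrite -sum_dist_condE1 dist_t mulr_sumr -big_split; apply: eq_bigr => x _ /=.
  by rewrite /row_free_energy /free_energy /condE1; ring.
rewrite (tail_costE (q := q)) // => [|i /andP[ti iT]]; last by rewrite qq' ?gtn_eqF.
rewrite row_sumE /stage_cost.
have := ler_wpM2l binv_ge0 MI_t; have := mulr_ge0_le0 binv_ge0 future_le0.
lra.
Qed.

Definition update_row q t x (k : Xt -> R) : nat -> X -> Xt -> R := fun s =>
  if s == t then (fun x' => if x' == x then k else q t x')
  else if s == T then (fun _ => q T x) else q s.

Lemma update_row_feasible q t x k : feasible T q pi -> is_dist k -> (t < T)%N ->
  feasible T (update_row q t x k) pi.
Proof.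
move=> [q_kernel pi_kernel] [k_ge0 k1] tT; split=> // s sT; rewrite /update_row.
have [qt_ge0 qt1] := q_kernel t (ltnW tT); have [qT_ge0 qT1] := q_kernel T (leqnn T).
case: eqP => _.
  by split=> [x' y|x']; case: eqP => _; rewrite ?k_ge0 ?k1 ?qt_ge0 ?qt1.
by case: eqP => _; [split=> [_ y|_]; rewrite ?qT_ge0 ?qT1|exact: q_kernel].
Qed.

Lemma optimal_row_min_free_energy q t x k : 0 < beta -> feasible T q pi ->
  (forall q' pi', feasible T q' pi' ->
     Jcost T beta P c cT p0 q pi <= Jcost T beta P c cT p0 q' pi') ->
  (forall s, (t < s < T)%N -> forall x y, margq q s y = 0 -> q s x y = 0) ->
  (t < T)%N -> 0 < distq q t x ->
  is_dist k -> (forall y, margq q t y = 0 -> k y = 0) ->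
  row_free_energy q t x (q t x) <= row_free_energy q t x k.
Proof.
move=> beta_gt0 q_feas q_opt q_fin tT d_gt0 k_dist mk.
pose q' := update_row q t x k.
have q'_feas : feasible T q' pi by exact: update_row_feasible.
have q'_other s : (s < T)%N -> s != t -> q' s = q s.
  by move=> sT st; rewrite /q' /update_row (negPf st) ltn_eqF.
have q'_t x' : q' t x' = if x' == x then k else q t x'.
  by rewrite /q' /update_row eqxx.
have [d_ge0 _] := dist_is_dist q_feas (ltnW tT); have [q_ge0 _] := q_feas.1 t (ltnW tT).
have q'_ac x' y : margq q t y = 0 -> q' t x' y * distq q t x' = 0.
  by rewrite q'_t; case: eqP => [_ /mk ->|_ /(mix_eq0 d_ge0 q_ge0 x')]; rewrite ?mul0r.
have head_eq : \sum_(0 <= i < t) stage_cost q' i = \sum_(0 <= i < t) stage_cost q i.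
  apply: eq_big_nat => i /andP[_ it]; apply: stage_cost_eq_upto => s si.
  have st : (s < t)%N := leq_ltn_trans si it.
  by rewrite q'_other ?(ltn_trans st tT) ?ltn_eqF.
have MI'_T : MIq q' T = 0.
  apply: (mutinf_const (k := q T x)) => [x'|].
    by rewrite /q' /update_row gtn_eqF // eqxx.
  by case: (dist_is_dist q'_feas (leqnn T)).
have MI_T : 0 <= beta^-1 * MIq q T.
  have [dT_ge0 dT1] := dist_is_dist q_feas (leqnn T).
  have [qT_ge0 qT1] := q_feas.1 T (leqnn T).
  by apply: mulr_ge0; [rewrite invr_ge0 ltW|exact: mutinf_ge0].
have J_le := q_opt q' pi q'_feas.
rewrite !(Jcost_split _ tT) head_eq MI'_T mulr0 addr0 in J_le.
have le_q' := stage_tail_le beta_gt0 q_feas q'_feas tT q'_other q_fin q'_ac.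
have eq_q := stage_tail_eq q tT.
have : \sum_x' distq q t x' * row_free_energy q t x' (q t x')
    <= \sum_x' distq q t x' * row_free_energy q t x' (q' t x') by lra.
have rows_other : \sum_(x' | x' != x) distq q t x' * row_free_energy q t x' (q' t x')
    = \sum_(x' | x' != x) distq q t x' * row_free_energy q t x' (q t x').
  by apply: eq_bigr => x' x'x; rewrite q'_t (negPf x'x).
by rewrite (bigD1 x) // [leRHS](bigD1 x) //= q'_t eqxx rows_other lerD2r ler_pM2l.
Qed.

End OptimalityCondition.

Theorem theorem2 (R : realType) (X Xt U : finType) (T : nat) (beta : R)
  (P : nat -> X -> U -> X -> R) (c : nat -> X -> U -> R) (cT : X -> R)
  (p0 : X -> R) (q : nat -> X -> Xt -> R) (pi : nat -> Xt -> U -> R) (t : nat) :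
  0 < beta ->
  is_dist p0 ->
  (forall s, (s < T)%N -> forall x, is_kernel (P s x)) ->
  feasible T q pi ->
  (forall (q' : nat -> X -> Xt -> R) (pi' : nat -> Xt -> U -> R), feasible T q' pi' ->
     Jcost T beta P c cT p0 q pi <= Jcost T beta P c cT p0 q' pi') ->
  (* finiteness of the KL terms entering nu_{t+1}, ..., nu_T *)
  (forall s, (t < s)%N -> (s <= T)%N -> forall x xt,
     marg P p0 q pi s xt = 0 -> q s x xt = 0) ->
  (t < T)%N ->
  forall x, 0 < dist P p0 q pi t x ->
  forall xt,
    q t x xt =
      marg P p0 q pi t xt
      * expR (- beta * condE2 P c pi t (nu T beta P c cT p0 q pi t.+1) x xt)
      / Zpart T beta P c cT p0 q pi t x.
Proof.
move=> beta_gt0 p0_dist P_kernel q_feas q_opt q_fin tT x d_gt0.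
set m := marg P p0 q pi t; set E := condE2 P c pi t (nu T beta P c cT p0 q pi t.+1) x.
have d_dist := dist_is_dist p0_dist P_kernel q_feas (ltnW tT).
have q_kernel := q_feas.1 t (ltnW tT).
have [m_ge0 m1] : is_dist m := mix_is_dist d_dist q_kernel.
move: d_dist q_kernel => [d_ge0 _] [q_ge0 q1].
have Z_gt0 : 0 < partition beta E m by apply: partition_gt0 => //; rewrite m1.
have q_row : is_dist (q t x) by split; [exact: q_ge0|exact: q1].
have gibbs_dist : is_dist (gibbs beta E m) by split; [exact: gibbs_ge0|exact: sum_gibbs].
have m0_q y : m y = 0 -> q t x y = 0 by apply: mix_eq0_kernel; rewrite ?lt0r_neq0.
have m0_gibbs y : m y = 0 -> gibbs beta E m y = 0 by move=> m0; rewrite /gibbs m0 !mul0r.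
suff q_gibbs : q t x =1 gibbs beta E m by move=> xt; rewrite q_gibbs.
apply: (free_energy_le_gibbs m_ge0 beta_gt0 Z_gt0 q_row m0_q).
apply: optimal_row_min_free_energy => // s /andP[ts sT].
by apply: q_fin => //; apply: ltnW.
Qed.
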